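(* Let $f=(f_1,f_2):\mathbb{R}\times\mathbb{R}^2,\mathbf 0\to\mathbb{R}^2,\mathbf 0$ be an analytic germ in $(t,x_1,x_2)$, $J=\partial(f_1,f_2)/\partial(x_1,x_2)$, $F_i=\partial(f_i,J)/\partial(x_1,x_2)$, and assume $$\dim_{\mathbb{R}}\mathcal{O}_3/\langle t,f_1,f_2\rangle<\infty,\ \dim_{\mathbb{R}}\mathcal{O}_3/\langle t,F_1,F_2\rangle<\infty,\ J(\mathbf{0})=0,\ \dim_{\mathbb{R}}\mathcal{O}_3/\langle t,\partial J/\partial x_1,\partial J/\partial x_2\rangle<\infty.$$ Let $Q=\mathcal{O}_3/\langle t,J,F_1,F_2\rangle$. Then $\dim_{\mathbb{R}}Q<\infty$, i.e. the origin is isolated in $(\{0\}\times\mathbb{C}^2)\cap V_{\mathbb{C}}(J,F_1,F_2)$.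
   Context: $\mathcal{O}_3=\mathbb{R}\{t,x_1,x_2\}$ is the ring of real analytic germs at the origin; $V_{\mathbb{C}}(\cdot)$ is the germ of complex common zeros. *)

From Stdlib Require Import Reals List.
Import ListNotations.
Open Scope R_scope.

(** Power series in (t, x1, x2): coefficient of t^i x1^j x2^k. *)
Definition ps := nat -> nat -> nat -> R.

(** Real analytic germ at 0 = power series with positive radius of
    convergence: |a_{ijk}| r^(i+j+k) bounded for some r > 0. *)
Definition convergent (a : ps) : Prop :=
  exists r C : R, 0 < r /\ forall i j k, Rabs (a i j k) * r ^ (i + j + k) <= C.

Definition pzero : ps := fun _ _ _ => 0.
Definition padd (a b : ps) : ps := fun i j k => a i j k + b i j k.
Definition psub (a b : ps) : ps := fun i j k => a i j k - b i j k.
Definition pscale (c : R) (a : ps) : ps := fun i j k => c * a i j k.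

Definition pmul (a b : ps) : ps := fun i j k =>
  sum_f_R0 (fun i1 =>
    sum_f_R0 (fun j1 =>
      sum_f_R0 (fun k1 =>
        a i1 j1 k1 * b (i - i1)%nat (j - j1)%nat (k - k1)%nat) k) j) i.

Definition pt : ps := fun i j k =>
  if (Nat.eqb i 1 && Nat.eqb j 0 && Nat.eqb k 0)%bool then 1 else 0.

Definition dx1 (a : ps) : ps := fun i j k => INR (S j) * a i (S j) k.
Definition dx2 (a : ps) : ps := fun i j k => INR (S k) * a i j (S k).

Definition pjac (g h : ps) : ps :=
  psub (pmul (dx1 g) (dx2 h)) (pmul (dx2 g) (dx1 h)).

Fixpoint lincomb (hs gs : list ps) : ps :=
  match hs, gs with
  | h :: hs', g :: gs' => padd (pmul h g) (lincomb hs' gs')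
  | _, _ => pzero
  end.

Fixpoint rlincomb (cs : list R) (bs : list ps) : ps :=
  match cs, bs with
  | c :: cs', b :: bs' => padd (pscale c b) (rlincomb cs' bs')
  | _, _ => pzero
  end.

Definition in_ideal (gs : list ps) (p : ps) : Prop :=
  exists hs : list ps, length hs = length gs /\ Forall convergent hs /\
    forall i j k, p i j k = lincomb hs gs i j k.

(** dim_R O_3 / <gs> < infinity: finitely many germs span O_3 modulo <gs>. *)
Definition finite_quot (gs : list ps) : Prop :=
  exists bs : list ps, Forall convergent bs /\
    forall p, convergent p ->
      exists cs : list R, length cs = length bs /\
        in_ideal gs (psub p (rlincomb cs bs)).

From Stdlib Require Import Reals List Lra Lia.
Import ListNotations.
Open Scope R_scope.

(* Enlarging the list of generators enlarges the ideal, so it can only lower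
   the codimension: a spanning family modulo <t, F1, F2> also spans modulo
   <t, J, F1, F2>. *)

Lemma sum_f_R0_zero (f : nat -> R) (n : nat) :
  (forall m, f m = 0) -> sum_f_R0 f n = 0.
Proof. intro Hf; induction n; simpl; rewrite ?IHn, Hf; lra. Qed.

Lemma pmul_zero_l (b : ps) i j k : pmul pzero b i j k = 0.
Proof.
  unfold pmul.
  do 3 (apply sum_f_R0_zero; intro).
  unfold pzero; lra.
Qed.

Lemma convergent_zero : convergent pzero.
Proof. exists 1, 0; split; [lra |]. intros; unfold pzero; rewrite Rabs_R0; lra. Qed.

Lemma lincomb_insert_zero (hs1 hs2 gs1 gs2 : list ps) (g : ps) :
  length hs1 = length gs1 ->
  forall i j k,
    lincomb (hs1 ++ pzero :: hs2) (gs1 ++ g :: gs2) i j k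
    = lincomb (hs1 ++ hs2) (gs1 ++ gs2) i j k.
Proof.
  revert hs1; induction gs1 as [| g1 gs1 IH]; intros [| h1 hs1] Hlen i j k;
    simpl in Hlen |- *; try discriminate.
  - unfold padd; rewrite pmul_zero_l; lra.
  - unfold padd; rewrite IH by congruence; reflexivity.
Qed.

Lemma in_ideal_insert (gs1 gs2 : list ps) (g p : ps) :
  in_ideal (gs1 ++ gs2) p -> in_ideal (gs1 ++ g :: gs2) p.
Proof.
  intros [hs [Hlen [Hconv Heq]]].
  set (n := length gs1).
  assert (Hsplit : hs = firstn n hs ++ skipn n hs) by (symmetry; apply firstn_skipn).
  assert (Hn : length (firstn n hs) = n).
  { rewrite length_firstn, Hlen, length_app; lia. }
  rewrite Hsplit in Hconv, Heq.
  apply Forall_app in Hconv as [Hconv1 Hconv2].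
  exists (firstn n hs ++ pzero :: skipn n hs); repeat split.
  - rewrite !length_app in *; simpl; rewrite length_skipn, Hn, Hlen; lia.
  - apply Forall_app; split; [| constructor]; auto using convergent_zero.
  - intros i j k; rewrite Heq; symmetry; now apply lincomb_insert_zero.
Qed.

Lemma finite_quot_insert (gs1 gs2 : list ps) (g : ps) :
  finite_quot (gs1 ++ gs2) -> finite_quot (gs1 ++ g :: gs2).
Proof.
  intros [bs [Hbs Hspan]].
  exists bs; split; [exact Hbs |].
  intros p Hp; destruct (Hspan p Hp) as [cs [Hcs Hideal]].
  exists cs; split; [exact Hcs |].
  now apply in_ideal_insert.
Qed.

Theorem lemma6p1 (f1 f2 : ps) :
  convergent f1 -> convergent f2 ->
  f1 0%nat 0%nat 0%nat = 0 -> f2 0%nat 0%nat 0%nat = 0 ->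
  finite_quot [pt; f1; f2] ->
  finite_quot [pt; pjac f1 (pjac f1 f2); pjac f2 (pjac f1 f2)] ->
  pjac f1 f2 0%nat 0%nat 0%nat = 0 ->
  finite_quot [pt; dx1 (pjac f1 f2); dx2 (pjac f1 f2)] ->
  finite_quot [pt; pjac f1 f2; pjac f1 (pjac f1 f2); pjac f2 (pjac f1 f2)].
Proof.
  intros _ _ _ _ _ HF _ _.
  exact (finite_quot_insert [pt] [pjac f1 (pjac f1 f2); pjac f2 (pjac f1 f2)]
           (pjac f1 f2) HF).
Qed.
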